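(* For every $n\in\mathbb{N}$, \[ \sum_{k=1}^{n+1}\frac{2^k}{k}=\frac{n+2}{2}\,{}_3F_2\!\left(1,1,n+3;\,2,2;\,\tfrac12\right)+H_{n+1}-\log 2. \]
   Context: Pochhammer symbol: $(\alpha)_0=1$, $(\alpha)_k=\alpha(\alpha+1)\cdots(\alpha+k-1)$. ${}_3F_2(a,b,c;d,e;z)=\sum_{k\ge0}\frac{(a)_k(b)_k(c)_k}{(d)_k(e)_k}\frac{z^k}{k!}$. $H_n=\sum_{k=1}^{n}\frac1k$. *)

From Stdlib Require Import Reals Factorial.
Open Scope R_scope.

Fixpoint poch (a : R) (k : nat) : R :=
  match k with
  | O => 1
  | S k' => poch a k' * (a + INR k')
  end.

Definition F32_term (a b c d e z : R) (k : nat) : R :=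
  poch a k * poch b k * poch c k / (poch d k * poch e k) * z ^ k / INR (fact k).

Definition F32_sum (a b c d e z L : R) : Prop :=
  infinite_sum (F32_term a b c d e z) L.

Fixpoint harmonic (n : nat) : R :=
  match n with
  | O => 0
  | S n' => harmonic n' + / INR (S n')
  end.

Fixpoint sum_pow2_over (m : nat) : R :=
  match m with
  | O => 0
  | S m' => sum_pow2_over m' + 2 ^ (S m') / INR (S m')
  end.

(* With c_k(m) = (m)_k / k!, consider W_j(m) = sum_k c_k(m) 2^-k / (k+1)^j, so that
   W_0(m) = (1 - 1/2)^-m = 2^m and W_2(n+3) is the 3F2 value of the theorem.  The identity
   m c_k(m+1) - (m-1) c_k(m) = (k+1) c_k(m) gives m W_{j+1}(m+1) - (m-1) W_{j+1}(m) = W_j(m).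
   At integer m the left side telescopes: from W_0(i+1) = 2^(i+1) one gets
   i W_1(i+1) = 2^(i+1) - 2, and then, starting from W_1(1) = 2 log 2,
   (n+1) W_2(n+2) = 2 log 2 + 2 sum_(k<=n) 2^k/k - 2 H_n. *)
From Coquelicot Require Import Coquelicot.
From Stdlib Require Import Reals Lra Lia Factorial.
Open Scope R_scope.

Lemma INR_S_pos k : 0 < INR (S k).
Proof. apply lt_0_INR; lia. Qed.

Lemma INR_fact_pos k : 0 < INR (fact k).
Proof. apply lt_0_INR, lt_O_fact. Qed.

Lemma is_derive_pow_succ_div k x : is_derive (fun y => y ^ S k / INR (S k)) x (x ^ k).
Proof.
  pose proof (INR_S_pos k) as Hk.
  evar (l : R); replace (x ^ k) with l; unfold l; [auto_derive; auto|].
  change (1 * (INR (S k) * x ^ k) * / INR (S k) = x ^ k); field; lra.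
Qed.

(* g_N(y) = sum_(k<=N) y^(k+1)/(k+1) + ln (1 - y); its derivative is a geometric sum
   plus -1/(1-y), which collapses to - y^(N+1) / (1 - y). *)
Lemma derivable_pt_lim_log_remainder N x : x < 1 ->
  derivable_pt_lim (fun y => sum_f_R0 (fun k => y ^ S k / INR (S k)) N + ln (1 - y)) x
    (- x ^ S N / (1 - x)).
Proof.
  intros Hx; apply is_derive_Reals.
  assert (Hsum : forall N, is_derive (fun y => sum_f_R0 (fun k => y ^ S k / INR (S k)) N) x
                                  (sum_f_R0 (fun k => x ^ k) N)).
  { induction N0 as [|N0 IH]; [apply is_derive_pow_succ_div|].
    apply (is_derive_plus (fun y => sum_f_R0 (fun k => y ^ S k / INR (S k)) N0)
                          (fun y => y ^ S (S N0) / INR (S (S N0)))); auto.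
    apply is_derive_pow_succ_div. }
  evar (l : R); replace (- x ^ S N / (1 - x)) with l; unfold l.
  - apply (is_derive_plus _ (fun y => ln (1 - y))); [apply Hsum|auto_derive; [lra|reflexivity]].
  - unfold plus; simpl; rewrite tech3 by lra.
    change ((1 - x * x ^ N) / (1 - x) + - (1) * / (1 + - x) = - (x * x ^ N) / (1 - x)).
    field; lra.
Qed.

Lemma log_series_remainder_bound x N : 0 <= x < 1 ->
  Rabs (sum_f_R0 (fun k => x ^ S k / INR (S k)) N - - ln (1 - x)) <= x ^ S N / (1 - x).
Proof.
  intros [Hx0 Hx1].
  set (g := fun y => sum_f_R0 (fun k => y ^ S k / INR (S k)) N + ln (1 - y)).
  assert (Hg0 : g 0 = 0).
  { unfold g; rewrite Rminus_0_r, ln_1, sum_eq_R0; [ring|].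
    intros k _; rewrite pow_i by lia; unfold Rdiv; ring. }
  replace (_ - - ln (1 - x)) with (g x) by (unfold g; ring).
  destruct (Req_dec x 0) as [->|Hx].
  { rewrite Hg0, Rabs_R0; apply Rdiv_le_0_compat; [apply pow_le|]; lra. }
  destruct (MVT_cor2 g (fun y => - y ^ S N / (1 - y)) 0 x) as [c [Hmvt Hc]]; [lra| |].
  { intros c Hc; apply derivable_pt_lim_log_remainder; lra. }
  rewrite Hg0, !Rminus_0_r in Hmvt; rewrite Hmvt.
  assert (Hquot : 0 <= c ^ S N / (1 - c) <= x ^ S N / (1 - x)).
  { split; [apply Rdiv_le_0_compat; [apply pow_le|]; lra|].
    unfold Rdiv; apply Rmult_le_compat.
    - apply pow_le; lra.
    - apply Rlt_le, Rinv_0_lt_compat; lra.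
    - apply pow_incr; lra.
    - apply Rinv_le_contravar; lra. }
  replace (- c ^ S N / (1 - c) * x) with (- (c ^ S N / (1 - c) * x)) by (field; lra).
  rewrite Rabs_Ropp, Rabs_pos_eq by nra; nra.
Qed.

Lemma is_series_log_one_minus x : 0 <= x < 1 ->
  is_series (fun k => x ^ S k / INR (S k)) (- ln (1 - x)).
Proof.
  intros Hx; apply is_series_Reals; intros eps Heps.
  assert (Hpow : Rabs x < 1) by (rewrite Rabs_pos_eq; lra).
  destruct (pow_lt_1_zero x Hpow (eps * (1 - x))) as [N HN]; [nra|].
  exists N; intros n Hn; unfold R_dist.
  eapply Rle_lt_trans; [apply log_series_remainder_bound, Hx|].
  specialize (HN (S n) ltac:(lia)); rewrite Rabs_pos_eq in HN by (apply pow_le; lra).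
  apply (Rmult_lt_reg_r (1 - x)); [lra|].
  unfold Rdiv; rewrite Rmult_assoc, Rinv_l by lra; lra.
Qed.

Lemma poch_pos a k : 0 < a -> 0 < poch a k.
Proof.
  intros Ha; induction k as [|k IH]; simpl; [lra|].
  apply Rmult_lt_0_compat; [exact IH|pose proof (pos_INR k); lra].
Qed.

Lemma poch_succ_shift a k : poch a (S k) = a * poch (a + 1) k.
Proof.
  induction k as [|k IH]; [simpl; ring|].
  change (poch a (S (S k))) with (poch a (S k) * (a + INR (S k))).
  rewrite IH, S_INR; simpl; ring.
Qed.

Lemma poch_one k : poch 1 k = INR (fact k).
Proof.
  induction k as [|k IH]; [reflexivity|].
  change (poch 1 k * (1 + INR k) = INR (S k * fact k)).
  rewrite IH, mult_INR, S_INR; ring.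
Qed.

Lemma poch_two k : poch 2 k = INR (fact (S k)).
Proof.
  replace 2 with (1 + 1) by ring.
  rewrite <- (Rmult_1_l (poch (1 + 1) k)), <- poch_succ_shift; apply poch_one.
Qed.

Definition negbinom (m : R) (k : nat) : R := poch m k / INR (fact k).

Lemma negbinom_0 m : negbinom m 0 = 1.
Proof. unfold negbinom; simpl; field. Qed.

Lemma negbinom_one k : negbinom 1 k = 1.
Proof. unfold negbinom; rewrite poch_one; field; apply Rgt_not_eq, INR_fact_pos. Qed.

Lemma negbinom_pos m k : 0 < m -> 0 < negbinom m k.
Proof. intros; apply Rdiv_lt_0_compat; [apply poch_pos; auto|apply INR_fact_pos]. Qed.

Lemma negbinom_S m k : negbinom m (S k) = negbinom m k * (m + INR k) / INR (S k).
Proof.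
  unfold negbinom; change (poch m (S k)) with (poch m k * (m + INR k)).
  change (fact (S k)) with (S k * fact k)%nat; rewrite mult_INR.
  field; split; apply Rgt_not_eq; [apply INR_fact_pos|apply INR_S_pos].
Qed.

Lemma negbinom_pascal m k :
  negbinom (m + 1) (S k) = negbinom m (S k) + negbinom (m + 1) k.
Proof.
  unfold negbinom; rewrite (poch_succ_shift m k).
  change (poch (m + 1) (S k)) with (poch (m + 1) k * (m + 1 + INR k)).
  change (fact (S k)) with (S k * fact k)%nat; rewrite mult_INR, S_INR.
  pose proof (INR_fact_pos k); pose proof (pos_INR k); field; lra.
Qed.

Lemma negbinom_absorb m k :
  m * negbinom (m + 1) k - (m - 1) * negbinom m k = INR (S k) * negbinom m k.
Proof.
  unfold negbinom.
  assert (E : m * poch (m + 1) k = poch m k * (m + INR k)) by (rewrite <- poch_succ_shift; reflexivity).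
  rewrite S_INR; unfold Rdiv; rewrite <- Rmult_assoc, E; ring.
Qed.

Definition wterm (j : nat) (m : R) (k : nat) : R :=
  negbinom m k * (1 / 2) ^ k / INR (S k) ^ j.

Definition W (j : nat) (m : R) : R := Series (wterm j m).

Lemma wterm_pos j m k : 0 < m -> 0 < wterm j m k.
Proof.
  intros Hm; apply Rdiv_lt_0_compat; [|apply pow_lt, INR_S_pos].
  apply Rmult_lt_0_compat; [apply negbinom_pos; auto|apply pow_lt; lra].
Qed.

Lemma wterm_0_ratio m k : 0 < m ->
  wterm 0 m (S k) / wterm 0 m k = 1 / 2 + (m - 1) / 2 * / INR (S k).
Proof.
  intros Hm; unfold wterm; rewrite negbinom_S.
  pose proof (negbinom_pos m k Hm); pose proof (INR_S_pos k).
  assert (0 < (1 / 2) ^ k) by (apply pow_lt; lra).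
  rewrite S_INR in *; simpl pow; field; lra.
Qed.

Lemma ex_series_wterm_0 m : 0 < m -> ex_series (wterm 0 m).
Proof.
  intros Hm.
  apply (ex_series_ext (fun k => Rabs (wterm 0 m k))).
  { intros k; apply Rabs_pos_eq, Rlt_le, wterm_pos, Hm. }
  apply (ex_series_DAlembert _ (1 / 2)); [lra|intros k; apply Rgt_not_eq, wterm_pos, Hm|].
  apply (is_lim_seq_ext (fun k => 1 / 2 + (m - 1) / 2 * / INR (S k))).
  { intros k; rewrite Rabs_pos_eq; [symmetry; apply wterm_0_ratio, Hm|].
    apply Rlt_le, Rdiv_lt_0_compat; apply wterm_pos, Hm. }
  replace (Finite (1 / 2)) with (Finite (1 / 2 + (m - 1) / 2 * 0)) by (f_equal; ring).
  apply is_lim_seq_plus'; [apply is_lim_seq_const|].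
  apply is_lim_seq_mult'; [apply is_lim_seq_const|].
  replace (Finite 0) with (Rbar_inv p_infty) by reflexivity.
  apply is_lim_seq_inv; [|discriminate].
  apply (is_lim_seq_incr_1 INR), is_lim_seq_INR.
Qed.

Lemma ex_series_wterm j m : 0 < m -> ex_series (wterm j m).
Proof.
  intros Hm; apply (@ex_series_le R_AbsRing R_CompleteNormedModule _ (wterm 0 m));
    [|apply ex_series_wterm_0, Hm].
  intros k; change (Rabs (wterm j m k) <= wterm 0 m k).
  pose proof (wterm_pos j m k Hm) as Hpos.
  assert (Hge1 : 1 <= INR (S k) ^ j) by (apply pow_R1_Rle; rewrite S_INR; pose proof (pos_INR k); lra).
  rewrite Rabs_pos_eq by lra; unfold wterm; rewrite pow_O; unfold Rdiv.
  apply Rmult_le_compat_l; [|apply Rinv_le_contravar; lra].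
  apply Rlt_le, Rmult_lt_0_compat; [apply negbinom_pos, Hm|apply pow_lt; lra].
Qed.

Lemma W_0_one : W 0 1 = 2.
Proof.
  unfold W; rewrite (Series_ext _ (fun k => (1 / 2) ^ k)).
  - rewrite Series_geom by (rewrite Rabs_pos_eq; lra); field.
  - intros k; unfold wterm; rewrite negbinom_one, pow_O; field.
Qed.

Lemma W_1_one : W 1 1 = 2 * ln 2.
Proof.
  unfold W; rewrite (Series_ext _ (fun k => 2 * ((1 / 2) ^ S k / INR (S k)))).
  - rewrite Series_scal_l, (is_series_unique _ _ (is_series_log_one_minus (1 / 2) ltac:(lra))).
    replace (1 - 1 / 2) with (/ 2) by field; rewrite ln_Rinv by lra; ring.
  - intros k; unfold wterm; rewrite negbinom_one, pow_1; simpl pow.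
    field; apply Rgt_not_eq, INR_S_pos.
Qed.

(* Pascal's rule for (m)_k / k! shifts the series by one index. *)
Lemma W_0_succ m : 0 < m -> W 0 (m + 1) = 2 * W 0 m.
Proof.
  intros Hm; unfold W.
  assert (Hm1 : 0 < m + 1) by lra.
  assert (Hhead : forall m, wterm 0 m 0 = 1)
    by (intros; unfold wterm; rewrite negbinom_0, !pow_O; field).
  assert (Hshift : forall k, wterm 0 (m + 1) (S k) = wterm 0 m (S k) + / 2 * wterm 0 (m + 1) k).
  { intros k; unfold wterm; rewrite negbinom_pascal, !pow_O; simpl pow; field. }
  pose proof (Series_incr_1 _ (ex_series_wterm 0 m Hm)) as E0.
  pose proof (Series_incr_1 _ (ex_series_wterm 0 (m + 1) Hm1)) as E1.
  rewrite (Series_ext _ _ Hshift), Series_plus, Series_scal_l, !Hhead in E1.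
  - rewrite Hhead in E0; lra.
  - apply (proj1 (ex_series_incr_1 _)), ex_series_wterm, Hm.
  - apply (ex_series_scal_l (V := R_NormedModule)), ex_series_wterm, Hm1.
Qed.

Lemma W_succ_weight j m : 0 < m ->
  m * W (S j) (m + 1) - (m - 1) * W (S j) m = W j m.
Proof.
  intros Hm; unfold W.
  rewrite <- !Series_scal_l, <- Series_minus.
  - apply Series_ext; intros k; unfold wterm; rewrite <- tech_pow_Rmult.
    pose proof (INR_S_pos k) as Hk.
    assert (Hs : INR (S k) ^ j <> 0) by (apply pow_nonzero; lra).
    transitivity ((m * negbinom (m + 1) k - (m - 1) * negbinom m k)
                  * (1 / 2) ^ k / (INR (S k) * INR (S k) ^ j)); [field; lra|].
    rewrite negbinom_absorb; field; lra.
  - apply (ex_series_scal_l (V := R_NormedModule)), ex_series_wterm; lra.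
  - apply (ex_series_scal_l (V := R_NormedModule)), ex_series_wterm; lra.
Qed.

Lemma W_0_nat i : W 0 (INR i + 1) = 2 ^ S i.
Proof.
  induction i as [|i IH].
  - simpl INR; rewrite Rplus_0_l, W_0_one; simpl; ring.
  - rewrite S_INR, W_0_succ, IH by (pose proof (pos_INR i); lra); simpl; ring.
Qed.

Lemma W_1_nat i : INR i * W 1 (INR i + 1) = 2 ^ S i - 2.
Proof.
  induction i as [|i IH]; [simpl; ring|].
  pose proof (W_succ_weight 0 (INR i + 1) ltac:(pose proof (pos_INR i); lra)) as H.
  rewrite W_0_nat in H; rewrite S_INR; simpl pow in *.
  replace (INR i + 1 - 1) with (INR i) in H by ring; lra.
Qed.

Lemma W_2_nat n :
  INR (S n) * W 2 (INR (S n) + 1) = 2 * ln 2 + 2 * sum_pow2_over n - 2 * harmonic n.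
Proof.
  induction n as [|n IH].
  - pose proof (W_succ_weight 1 1 ltac:(lra)) as H.
    rewrite W_1_one in H; simpl sum_pow2_over; simpl harmonic; simpl INR; lra.
  - pose proof (W_succ_weight 1 (INR (S n) + 1) ltac:(pose proof (INR_S_pos n); lra)) as H.
    pose proof (W_1_nat (S n)) as H1; pose proof (INR_S_pos n).
    replace (INR (S n) + 1 - 1) with (INR (S n)) in H by ring.
    assert (HW1 : W 1 (INR (S n) + 1) = (2 ^ S (S n) - 2) / INR (S n))
      by (apply (Rmult_eq_reg_l (INR (S n))); [rewrite H1; field|]; lra).
    change (sum_pow2_over (S n)) with (sum_pow2_over n + 2 ^ S n / INR (S n)).
    change (harmonic (S n)) with (harmonic n + / INR (S n)).
    rewrite (S_INR (S n)); rewrite HW1 in H.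
    simpl pow in *; unfold Rdiv in *; lra.
Qed.

Lemma F32_sum_W_2 m : 0 < m -> F32_sum 1 1 m 2 2 (1 / 2) (W 2 m).
Proof.
  intros Hm; apply is_series_Reals.
  apply (is_series_ext (wterm 2 m)); [|apply Series_correct, ex_series_wterm, Hm].
  intros k; unfold wterm, F32_term, negbinom.
  rewrite !poch_one, !poch_two; change (fact (S k)) with (S k * fact k)%nat.
  rewrite mult_INR; pose proof (INR_fact_pos k); pose proof (INR_S_pos k).
  (* is_series_ext states the equation at a NormedModule carrier; field needs it at R. *)
  match goal with |- ?a = ?b => change (@eq R a b) end.
  field; lra.
Qed.

Theorem mainTheorem15 : forall n : nat,
  exists F : R,
    F32_sum 1 1 (INR n + 3) 2 2 (1/2) F /\
    sum_pow2_over (S n) = (INR n + 2) / 2 * F + harmonic (S n) - ln 2.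
Proof.
  intros n; pose proof (pos_INR n).
  exists (W 2 (INR n + 3)); split; [apply F32_sum_W_2; lra|].
  pose proof (W_2_nat (S n)) as H2.
  rewrite !S_INR in H2; replace (INR n + 1 + 1 + 1) with (INR n + 3) in H2 by ring.
  lra.
Qed.
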